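(* Let $m\ge1$ be an integer, $r=2m+1$, $\varepsilon>0$ real, $p$ a positive integer, and $\mathcal C_0^r,\dots,\mathcal C_{r-1}^r>0$. Let $f_j=f(x_j)$ be values of a function on a uniform grid $x_j=x_0+j\Delta x$, fix an index $i$, and let $\hat f_{i+1/2}=\sum_{k=0}^{r-1}\omega_k\,g(f_{i+k-r+1},\dots,f_{i+k})$ be the WENO reconstruction defined in the context. Then $$\hat f_{i+1/2}=\frac{\mathbf p_1(\mathbf f)}{\mathbf p_2(\mathbf f)},\qquad \mathbf f=(f_{i-r+1},\dots,f_{i+r-1}),$$ where $\mathbf p_1,\mathbf p_2$ are multivariate polynomials in $\mathbf f$ of degree at most $2pr-1$ and $2p(r-1)$ respectively, with $\mathbf p_2(\mathbf f)>0$ for all real $\mathbf f$.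
   Context: For $k=0,\dots,r-1$, the candidate stencil $S^k$ consists of the grid points $x_{i+k-r+1},\dots,x_{i+k}$; $\mathbf p_k$ is the polynomial of degree at most $r-1$ interpolating $f$ there. The linear map $g$ is $g(f_{i+k-r+1},\dots,f_{i+k})=\sum_{l=0}^{r-1}c^r_{k,l}f_{i+k-r+1+l}=\mathbf p_k(x_{i+1/2})$, with constants $c^r_{k,l}$ depending only on $r,k,l$, where $x_{i\pm1/2}=x_i\pm\Delta x/2$. The smoothness indicator is $\mathbf{IS}_k=\sum_{l=1}^{r-1}(\Delta x)^{2l-1}\int_{x_{i-1/2}}^{x_{i+1/2}}\big(\mathbf p_k^{(l)}(x)\big)^2dx$, and the WENO weights are $\omega_k=\alpha_k/(\alpha_0+\dots+\alpha_{r-1})$, $\alpha_k=\mathcal C_k^r/(\varepsilon+\mathbf{IS}_k)^p$. *)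

From HB Require Import structures.
From mathcomp Require Import all_boot all_order all_algebra.
From mathcomp Require Export mpoly.
Unset Printing Implicit Defensive.
Import Order.TTheory GRing.Theory Num.Theory.
Local Open Scope ring_scope.

Section WENO.
Variable R : rcfType.

Definition grid (x0 dx : R) (j : int) : R := x0 + j%:~R * dx.

Definition lagrange (n : nat) (xs ys : 'I_n -> R) : {poly R} :=
  \sum_(l < n) ys l *:
     \prod_(j < n | j != l) (('X - (xs j)%:P) * ((xs l - xs j)^-1)%:P).

Arguments lagrange {n} xs ys.

Definition poly_prim (q : {poly R}) : {poly R} :=
  \poly_(j < (size q).+1) (if j is j'.+1 then q`_j' / j%:R else 0).
Definition poly_integral (q : {poly R}) (a b : R) : R :=
  (poly_prim q).[b] - (poly_prim q).[a].

Definition weno_r (m : nat) : nat := (2 * m + 1)%N.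

Definition weno_pk (m : nat) (x0 dx : R) (i : int) (f : R -> R)
    (k : 'I_(weno_r m)) : {poly R} :=
  lagrange
    (fun l : 'I_(weno_r m) =>
       grid x0 dx (i + (Posz k) - (Posz (weno_r m)) + 1 + (Posz l)))
    (fun l : 'I_(weno_r m) =>
       f (grid x0 dx (i + (Posz k) - (Posz (weno_r m)) + 1 + (Posz l)))).

Definition x_iph (x0 dx : R) (i : int) : R := grid x0 dx i + dx / 2%:R.
Definition x_imh (x0 dx : R) (i : int) : R := grid x0 dx i - dx / 2%:R.

Definition weno_g (m : nat) (x0 dx : R) (i : int) (f : R -> R) (k : 'I_(weno_r m)) : R := (weno_pk m x0 dx i f k).[x_iph x0 dx i].

Definition weno_IS (m : nat) (x0 dx : R) (i : int) (f : R -> R) (k : 'I_(weno_r m)) : R :=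
  \sum_(1 <= l < weno_r m)
     dx ^+ (2 * l - 1) *
     poly_integral (((weno_pk m x0 dx i f k)^`(l)) ^+ 2)
                   (x_imh x0 dx i) (x_iph x0 dx i).

Definition weno_alpha m (eps : R) (p : nat) (C : 'I_(weno_r m) -> R)
    (x0 dx : R) (i : int) (f : R -> R) (k : 'I_(weno_r m)) : R :=
  C k / (eps + weno_IS m x0 dx i f k) ^+ p.

Definition weno_omega (m : nat) (eps : R) (p : nat) (C : 'I_(weno_r m) -> R)
    (x0 dx : R) (i : int) (f : R -> R) (k : 'I_(weno_r m)) : R :=
  weno_alpha m eps p C x0 dx i f k /
  \sum_(j < weno_r m) weno_alpha m eps p C x0 dx i f j.

Definition weno_fhat (m : nat) (eps : R) (p : nat) (C : 'I_(weno_r m) -> R)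
    (x0 dx : R) (i : int) (f : R -> R) : R :=
  \sum_(k < weno_r m) weno_omega m eps p C x0 dx i f k * weno_g m x0 dx i f k.

Definition weno_fvec (m : nat) (x0 dx : R) (i : int) (f : R -> R) : 'I_(2 * weno_r m - 1) -> R :=
  fun j => f (grid x0 dx (i - (Posz (weno_r m)) + 1 + (Posz j))).

End WENO.

Arguments grid {R}.
Arguments poly_prim {R}.
Arguments poly_integral {R}.
Arguments x_iph {R}.
Arguments x_imh {R}.
Arguments weno_pk {R}.
Arguments weno_g {R}.
Arguments weno_IS {R}.
Arguments weno_alpha {R}.
Arguments weno_omega {R}.
Arguments weno_fhat {R}.
Arguments weno_fvec {R}.

From Pilot Require Import Defs.
From HB Require Import structures.
From mathcomp Require Import all_boot all_order all_algebra.
From mathcomp Require Import mpoly polyrcf.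
From mathcomp Require Import ring lra zify.
Import Order.TTheory GRing.Theory Num.Theory.
Local Open Scope ring_scope.

(* Each p_k is the Lagrange combination of the values of f on S^k with basis
   polynomials that depend only on the grid, so g_k is a linear and IS_k a
   quadratic polynomial in the vector f, and IS_k >= 0 as a sum of integrals of
   squares.  Multiplying numerator and denominator of the weights by
   prod_j (eps + IS_j)^p gives
     fhat = sum_k C_k g_k c_k / sum_k C_k c_k,  c_k = prod_(j <> k) (eps + IS_j)^p,
   whose numerator has degree 1 + 2p(r-1) <= 2pr - 1 and whose denominator, of
   degree 2p(r-1), is at least C_k eps^(p(r-1)) > 0.  Nothing uses 1 <= m.
   The bounds are on msize = degree + 1. *)

Section PolyIntegral.
Context {R : rcfType}.
Implicit Types (q : {poly R}) (a b : R).

Lemma coef_poly_prim q j :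
  (poly_prim q)`_j = if j is j'.+1 then q`_j' / j%:R else 0.
Proof.
rewrite coef_poly; case: ltnP => // lt_q_j; case: j lt_q_j => // j lt_q_j.
by rewrite nth_default ?mul0r // -ltnS.
Qed.

Lemma deriv_poly_prim q : (poly_prim q)^`() = q.
Proof.
apply/polyP => j; rewrite coef_deriv coef_poly_prim -[LHS]mulr_natr divfK //.
by rewrite pnatr_eq0.
Qed.

Fact poly_prim_is_semilinear : semilinear (@poly_prim R).
Proof.
split=> [c q|q1 q2]; apply/polyP => -[|j];
  by rewrite !(coefZ, coefD, coef_poly_prim) ?(mulr0, addr0, mulrA, mulrDl).
Qed.
HB.instance Definition _ := GRing.isSemilinear.Build R {poly R} {poly R} _
  (@poly_prim R) poly_prim_is_semilinear.

Lemma poly_integralZ c q a b :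
  poly_integral (c *: q) a b = c * poly_integral q a b.
Proof. by rewrite /poly_integral linearZ /= !hornerZ mulrBr. Qed.

Lemma poly_integral_sum (I : Type) (s : seq I) (P : pred I) (F : I -> {poly R}) a b :
  poly_integral (\sum_(k <- s | P k) F k) a b =
  \sum_(k <- s | P k) poly_integral (F k) a b.
Proof. by rewrite /poly_integral raddf_sum !horner_sum -sumrB. Qed.

Lemma poly_integral_ge0 q a b :
  a <= b -> {in `]a, b[, forall x, 0 <= q.[x]} -> 0 <= poly_integral q a b.
Proof.
move=> le_ab q_ge0; rewrite subr_ge0.
apply: (ler_hornerW (a := a) (b := b)) => //.
- by move=> x /q_ge0; rewrite deriv_poly_prim.
- by rewrite in_itv /= lexx le_ab.
- by rewrite in_itv /= lexx le_ab.
Qed.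

End PolyIntegral.

Section MsizeBounds.
Context {R : idomainType} {n : nat}.
Implicit Types p q : {mpoly R[n]}.

Lemma msizeM_le_pred p q : (msize (p * q) <= (msize p + msize q).-1)%N.
Proof.
have [->|p0] := eqVneq p 0; first by rewrite mul0r msize0.
have [->|q0] := eqVneq q 0; first by rewrite mulr0 msize0.
by rewrite msizeM.
Qed.

Lemma msize_prod_le (I : Type) (s : seq I) (P : pred I) (F : I -> {mpoly R[n]})
    (d : I -> nat) :
  (forall k, P k -> msize (F k) <= (d k).+1)%N ->
  (msize (\prod_(k <- s | P k) F k) <= (\sum_(k <- s | P k) d k).+1)%N.
Proof.
apply: (big_ind2 (fun q e => msize q <= e.+1)%N); first by rewrite msize1.
move=> q1 e1 q2 e2 le1 le2; apply: leq_trans (msizeM_le_pred q1 q2) _; lia.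
Qed.

Lemma msize_exp_le p d e :
  (msize p <= d.+1)%N -> (msize (p ^+ e) <= (d * e).+1)%N.
Proof.
move=> le_p; rewrite -[in p ^+ e](card_ord e) -prodr_const.
have -> : (d * e = \sum_(k < e) d)%N by rewrite sum_nat_const card_ord mulnC.
exact: msize_prod_le.
Qed.

Lemma msize_sum_le (I : Type) (s : seq I) (P : pred I) (F : I -> {mpoly R[n]}) d :
  (forall k, P k -> msize (F k) <= d)%N -> (msize (\sum_(k <- s | P k) F k) <= d)%N.
Proof.
move=> le_F; apply: (big_ind (fun q => msize q <= d)%N) => //; first by rewrite msize0.
by move=> q1 q2 le1 le2; apply: leq_trans (msizeD_le _ _) _; rewrite geq_max le1.
Qed.

End MsizeBounds.

Definition lagrange_basis {R : rcfType} {n : nat} (xs : 'I_n -> R) (l : 'I_n) :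
    {poly R} :=
  \prod_(j < n | j != l) (('X - (xs j)%:P) * ((xs l - xs j)^-1)%:P).

(* [lagrange] alone would denote the one of qpoly, exported by all_algebra. *)
Lemma lagrangeE (R : rcfType) (n : nat) (xs ys : 'I_n -> R) :
  Defs.lagrange R n xs ys = \sum_(l < n) ys l *: lagrange_basis xs l.
Proof. by []. Qed.

Section LinearCombination.
Context {R : rcfType} {n s : nat}.
Variables (B : 'I_s -> {poly R}) (idx : 'I_s -> 'I_n).

Definition comb_poly (a : 'I_n -> R) : {poly R} := \sum_(l < s) a (idx l) *: B l.

Definition horner_comb_mpoly (x : R) : {mpoly R[n]} :=
  \sum_(l < s) (B l).[x] *: 'X_(idx l).

Lemma meval_horner_comb a x : (horner_comb_mpoly x).@[a] = (comb_poly a).[x].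
Proof.
rewrite raddf_sum horner_sum; apply: eq_bigr => l _.
by rewrite /= mevalZ mevalXU hornerZ mulrC.
Qed.

Lemma msize_horner_comb x : (msize (horner_comb_mpoly x) <= 2)%N.
Proof.
apply: msize_sum_le => l _; apply: leq_trans (msizeZ_le _ _) _.
by rewrite msizeX mdeg1.
Qed.

Definition sqr_integral_comb_mpoly (k : nat) (x y : R) : {mpoly R[n]} :=
  \sum_(l1 < s) \sum_(l2 < s)
    poly_integral ((B l1)^`(k) * (B l2)^`(k)) x y *: ('X_(idx l1) * 'X_(idx l2)).

Lemma meval_sqr_integral_comb a k x y :
  (sqr_integral_comb_mpoly k x y).@[a] = poly_integral ((comb_poly a)^`(k) ^+ 2) x y.
Proof.
rewrite raddf_sum /comb_poly [_^`(k)]linear_sum expr2 mulr_suml poly_integral_sum.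
apply: eq_bigr => l1 _; rewrite raddf_sum mulr_sumr poly_integral_sum.
apply: eq_bigr => l2 _; rewrite !linearZ /= -scalerAl -scalerAr scalerA.
by rewrite poly_integralZ mevalZ mevalM !mevalXU mulrC.
Qed.

Lemma msize_sqr_integral_comb k x y :
  (msize (sqr_integral_comb_mpoly k x y) <= 3)%N.
Proof.
apply: msize_sum_le => l1 _; apply: msize_sum_le => l2 _.
apply: leq_trans (msizeZ_le _ _) _; apply: leq_trans (msizeM_le_pred _ _) _.
by rewrite !msizeX !mdeg1.
Qed.

End LinearCombination.

(* No hypothesis on [\sum_j C j / D j] is needed: when it vanishes, so do both sides. *)
Lemma sum_normalized_weights {F : fieldType} {I : finType} (C D g : I -> F) :
  (forall k, D k != 0) ->
  \sum_k (C k / D k / \sum_j C j / D j) * g k =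
  (\sum_k C k * (g k * \prod_(j | j != k) D j)) / \sum_k C k * \prod_(j | j != k) D j.
Proof.
move=> D_neq0; have T_neq0 : \prod_j D j != 0 by apply/prodf_neq0 => j _.
have weightE k : C k / D k = C k * \prod_(j | j != k) D j / \prod_j D j.
  have P_neq0 : \prod_(j | j != k) D j != 0 by apply/prodf_neq0 => j _.
  by rewrite [\prod_j D j](bigD1 k) //= invfM mulrACA mulfV // mulr1.
rewrite (eq_bigr _ (fun k _ => weightE k)) -mulr_suml [RHS]mulr_suml.
apply: eq_bigr => k _; rewrite weightE invf_div mulrA divfK //.
rewrite (mulrAC _ _ (g k)); congr (_ / _).
by rewrite -mulrA (mulrC (g k)).
Qed.

Section WenoRational.
Variables (R : rcfType) (m : nat) (eps : R) (p : nat) (C : 'I_(weno_r m) -> R).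
Variables (x0 dx : R) (i : int).

Local Notation r := (weno_r m).
Local Notation n := (2 * weno_r m - 1)%N.
Local Notation fvec := (weno_fvec m x0 dx i).

Lemma stencil_index_subproof (k l : 'I_r) : (k + l < n)%N.
Proof. by have := ltn_ord k; have := ltn_ord l; rewrite /weno_r; lia. Qed.

Definition stencil_index (k l : 'I_r) : 'I_n := Ordinal (stencil_index_subproof k l).

Definition stencil_node (k l : 'I_r) : R :=
  grid x0 dx (i + Posz k - Posz r + 1 + Posz l).

Definition stencil_poly (a : 'I_n -> R) (k : 'I_r) : {poly R} :=
  comb_poly (lagrange_basis (stencil_node k)) (stencil_index k) a.

Lemma weno_pk_stencil f k : weno_pk m x0 dx i f k = stencil_poly (fvec f) k.
Proof.
rewrite /weno_pk lagrangeE; apply: eq_bigr => l _; congr (_ *: _).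
by rewrite /weno_fvec; congr (f (grid _ _ _)); rewrite /= PoszD; ring.
Qed.

Definition smoothness (q : {poly R}) : R :=
  \sum_(1 <= l < r)
    dx ^+ (2 * l - 1) * poly_integral (q^`(l) ^+ 2) (x_imh x0 dx i) (x_iph x0 dx i).

Lemma weno_IS_stencil f k :
  weno_IS m x0 dx i f k = smoothness (stencil_poly (fvec f) k).
Proof. by rewrite /weno_IS weno_pk_stencil. Qed.

Hypothesis dx_gt0 : 0 < dx.

Lemma smoothness_ge0 q : 0 <= smoothness q.
Proof.
apply: sumr_ge0 => l _; rewrite mulr_ge0 ?exprn_ge0 ?(ltW dx_gt0) //.
apply: poly_integral_ge0 => [|x _]; last by rewrite horner_exp sqr_ge0.
have : 0 <= dx / 2%:R by rewrite divr_ge0 ?ltW.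
rewrite /x_imh /x_iph; lra.
Qed.

Definition weno_IS_mpoly (k : 'I_r) : {mpoly R[n]} :=
  \sum_(1 <= l < r) dx ^+ (2 * l - 1) *:
    sqr_integral_comb_mpoly (lagrange_basis (stencil_node k)) (stencil_index k) l
      (x_imh x0 dx i) (x_iph x0 dx i).

Lemma meval_IS_mpoly a k : (weno_IS_mpoly k).@[a] = smoothness (stencil_poly a k).
Proof.
rewrite raddf_sum; apply: eq_bigr => l _.
by rewrite /= mevalZ meval_sqr_integral_comb.
Qed.

Lemma msize_IS_mpoly k : (msize (weno_IS_mpoly k) <= 3)%N.
Proof.
apply: msize_sum_le => l _; apply: leq_trans (msizeZ_le _ _) _.
exact: msize_sqr_integral_comb.
Qed.

Definition weno_g_mpoly (k : 'I_r) : {mpoly R[n]} :=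
  horner_comb_mpoly (lagrange_basis (stencil_node k)) (stencil_index k) (x_iph x0 dx i).

Lemma msize_g_mpoly k : (msize (weno_g_mpoly k) <= 2)%N.
Proof. exact: msize_horner_comb. Qed.

Lemma meval_g_mpoly f k : (weno_g_mpoly k).@[fvec f] = weno_g m x0 dx i f k.
Proof. by rewrite meval_horner_comb /weno_g weno_pk_stencil. Qed.

Definition weno_cofactor (k : 'I_r) : {mpoly R[n]} :=
  \prod_(j | j != k) (eps%:MP + weno_IS_mpoly j) ^+ p.

Definition weno_num : {mpoly R[n]} := \sum_k C k *: (weno_g_mpoly k * weno_cofactor k).

Definition weno_den : {mpoly R[n]} := \sum_k C k *: weno_cofactor k.

Lemma meval_weno_cofactor a k :
  (weno_cofactor k).@[a] =
  \prod_(j | j != k) (eps + smoothness (stencil_poly a j)) ^+ p.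
Proof.
rewrite rmorph_prod; apply: eq_bigr => j _.
by rewrite rmorphXn /= mevalD mevalC meval_IS_mpoly.
Qed.

Lemma meval_cofactor_fvec f k :
  (weno_cofactor k).@[fvec f] = \prod_(j | j != k) (eps + weno_IS m x0 dx i f j) ^+ p.
Proof.
by rewrite meval_weno_cofactor; apply: eq_bigr => j _; rewrite weno_IS_stencil.
Qed.

Lemma msize_weno_cofactor k : (msize (weno_cofactor k) <= (2 * p * (r - 1)).+1)%N.
Proof.
have -> : (2 * p * (r - 1) = \sum_(j | j != k) 2 * p)%N.
  by rewrite sum_nat_const cardC1 card_ord subn1 mulnC.
apply: msize_prod_le => j _; apply: msize_exp_le.
apply: leq_trans (msizeD_le _ _) _; rewrite geq_max msize_IS_mpoly msizeC andbT.
by case: (_ != 0).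
Qed.

Hypotheses (eps_gt0 : 0 < eps) (p_gt0 : (0 < p)%N) (C_gt0 : forall k, 0 < C k).

Lemma weno_cofactor_gt0 a k : 0 < (weno_cofactor k).@[a].
Proof.
rewrite meval_weno_cofactor; apply: prodr_gt0 => j _.
by rewrite exprn_gt0 // ltr_wpDr ?smoothness_ge0.
Qed.

Lemma msize_weno_num : (msize weno_num <= 2 * p * r)%N.
Proof.
apply: msize_sum_le => k _; apply: leq_trans (msizeZ_le _ _) _.
apply: leq_trans (msizeM_le_pred _ _) _.
move: (msize_g_mpoly k) (msize_weno_cofactor k).
move: (msize _) (msize _) => dg dc; rewrite /weno_r addnK mulnDr muln1; lia.
Qed.

Lemma msize_weno_den : (msize weno_den <= (2 * p * (r - 1)).+1)%N.
Proof.
apply: msize_sum_le => k _; apply: leq_trans (msizeZ_le _ _) _.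
exact: msize_weno_cofactor.
Qed.

Lemma weno_den_gt0 a : 0 < weno_den.@[a].
Proof.
have r_gt0 : (0 < r)%N by rewrite /weno_r addn1.
rewrite raddf_sum (bigD1 (Ordinal r_gt0)) //= ltr_pwDl //.
  by rewrite mevalZ mulr_gt0 ?weno_cofactor_gt0.
by apply: sumr_ge0 => k _; rewrite mevalZ mulr_ge0 ?ltW ?weno_cofactor_gt0.
Qed.

Lemma weno_fhat_ratio f :
  weno_fhat m eps p C x0 dx i f = weno_num.@[fvec f] / weno_den.@[fvec f].
Proof.
have eps_IS_gt0 j : 0 < eps + weno_IS m x0 dx i f j.
  by rewrite weno_IS_stencil ltr_wpDr ?smoothness_ge0.
rewrite /weno_fhat /weno_omega /weno_alpha.
rewrite (sum_normalized_weights C (fun j => (eps + weno_IS m x0 dx i f j) ^+ p));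
  last by move=> j; rewrite expf_neq0 // gt_eqF.
rewrite !raddf_sum; congr (_ / _); apply: eq_bigr => k _.
  by rewrite /= mevalZ mevalM meval_g_mpoly meval_cofactor_fvec.
by rewrite /= mevalZ meval_cofactor_fvec.
Qed.

End WenoRational.

Theorem corollary5 (R : rcfType) (m : nat) (eps : R) (p : nat)
    (C : 'I_(weno_r m) -> R) (x0 dx : R) (i : int) :
  (1 <= m)%N -> 0 < eps -> (0 < p)%N -> (forall k, 0 < C k) -> 0 < dx ->
  exists P1 P2 : {mpoly R[2 * weno_r m - 1]},
    [/\ (msize P1 <= 2 * p * weno_r m)%N,
        (msize P2 <= (2 * p * (weno_r m - 1)).+1)%N,
        (forall v : 'I_(2 * weno_r m - 1) -> R, 0 < P2.@[v]) &
        (forall f : R -> R,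
           weno_fhat m eps p C x0 dx i f =
           P1.@[weno_fvec m x0 dx i f] / P2.@[weno_fvec m x0 dx i f])].
Proof.
move=> _ eps_gt0 p_gt0 C_gt0 dx_gt0.
exists (weno_num R m eps p C x0 dx i), (weno_den R m eps p C x0 dx i); split.
- exact: msize_weno_num.
- exact: msize_weno_den.
- exact: weno_den_gt0.
- exact: weno_fhat_ratio.
Qed.
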